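(* Let $s = s[1..n]$ be a string over a finite alphabet. The LZ77 parse of $s$ (as defined in the context) can be computed by a deterministic algorithm that has read-only random access to $s$, writes its output to a write-only output, and uses $O(\log n)$ bits of workspace.
   Context: The LZ77 parse considered here is the greedy, non-self-referencing variant. It partitions $s$ into consecutive phrases, left to right. The first phrase is the single character $s[1]$. Let $t$ be the position just after the already-parsed prefix $s[1..t-1]$, with $t \le n$. For each $1 \le i < t$, let $L_i$ be the length of the longest common prefix of $s[i..t-1]$ and $s[t..n]$; let $L = \max_i L_i$, and let $i^*$ be the minimal $i$ attaining $L$. If $L \le 1$, the next phrase is the single character $s[t]$, output as that character. Otherwise the next phrase is $s[t..t+L-1]$, output as the pair $(i^*, L)$. Each phrase is thus either a single character or a copy of a substring of the prefix already parsed. *)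

From mathcomp Require Import all_boot.
Set Implicit Arguments. Unset Strict Implicit. Unset Printing Implicit Defensive.

(** * LZ77 parse (greedy, non-self-referencing), positions are 1-based *)

Section LZ77.
Variable A : finType.

Inductive phrase := Char of A | Copy of nat & nat. (* Copy i L = pair (i*, L) *)

Fixpoint lcp (u v : seq A) : nat :=
  match u, v with
  | a :: u', b :: v' => if a == b then (lcp u' v').+1 else 0
  | _, _ => 0
  end.

Definition Lat (s : seq A) (t i : nat) : nat :=
  lcp (drop i.-1 (take t.-1 s)) (drop t.-1 s).

(* L = max_{1 <= i < t} L_i  (0 if there is no such i) *)
Definition Lmax (s : seq A) (t : nat) : nat :=
  \max_(1 <= i < t) Lat s t i.

Definition istar (s : seq A) (t : nat) : nat :=
  head 0 [seq i <- iota 1 t.-1 | Lat s t i == Lmax s t].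

Fixpoint parse_from (s : seq A) (fuel t : nat) : seq phrase :=
  match fuel with
  | 0 => [::]
  | fuel'.+1 =>
    match drop t.-1 s with
    | [::] => [::]
    | a :: _ =>
      let L := Lmax s t in
      if L <= 1 then Char a :: parse_from s fuel' t.+1
      else Copy (istar s t) L :: parse_from s fuel' (t + L)
    end
  end.

(* Each phrase has length >= 1, so size s phrases of fuel suffice. *)
Definition lz77 (s : seq A) : seq phrase := parse_from s (size s) 1.

Inductive outsym := OChar of A | ONum of nat.

Definition encode_phrase (p : phrase) : seq outsym :=
  match p with Char a => [:: OChar a] | Copy i L => [:: ONum i; ONum L] end.

Definition encode (ps : seq phrase) : seq outsym := flatten (map encode_phrase ps).

(** The workspace is the registers plus the
      finite control; bounding each register by (n+2)^c gives O(log n) bits. *)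
Inductive instr (Q : Type) (k : nat) :=
| IInc of 'I_k & Q
| IDec of 'I_k & Q                 (* r_j := r_j - 1 (truncated) *)
| IJz of 'I_k & Q & Q
| IRead of 'I_k & (option A -> Q)
| IEmitChar of A & Q
| IEmitReg of 'I_k & Q
| IHalt.

Record program := Program {
  pstate : finType;
  pregs : nat;
  pstart : pstate;
  pdelta : pstate -> instr pstate pregs }.

Record config (P : program) := Config {
  cstate : pstate P;
  cregs : 'I_(pregs P) -> nat;
  cout : seq outsym }.

Definition read_input (s : seq A) (p : nat) : option A :=
  if p == 0 then None else nth None (map Some s) p.-1.

Definition upd (k : nat) (r : 'I_k -> nat) (j : 'I_k) (v : nat) : 'I_k -> nat :=
  fun j' => if j' == j then v else r j'.

Definition step (P : program) (s : seq A) (c : config P) : config P :=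
  let: Config q r o := c in
  match @pdelta P q with
  | IInc j q' => Config q' (upd r j (r j).+1) o
  | IDec j q' => Config q' (upd r j (r j).-1) o
  | IJz j q1 q2 => Config (if r j == 0 then q1 else q2) r o
  | IRead j f => Config (f (read_input s (r j))) r o
  | IEmitChar a q' => Config q' r (rcons o (OChar a))
  | IEmitReg j q' => Config q' r (rcons o (ONum (r j)))
  | IHalt => c
  end.

Definition init (P : program) : config P := Config (pstart P) (fun _ => 0) [::].

Definition run (P : program) (s : seq A) (t : nat) : config P :=
  iter t (step s) (init P).

Definition halted (P : program) (c : config P) : bool :=
  if @pdelta P (cstate c) is IHalt then true else false.

Definition logspace_computes (P : program) (f : seq A -> seq outsym) : Prop :=
  exists c : nat, forall s : seq A,
    (exists T, halted (run P s T) /\ cout (run P s T) = f s) /\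
    (forall t (j : 'I_(pregs P)), cregs (run P s t) j <= (size s).+2 ^ c).

End LZ77.

From mathcomp Require Import all_boot zify.
From Stdlib Require Import FunctionalExtensionality.
Set Implicit Arguments. Unset Strict Implicit. Unset Printing Implicit Defensive.

(* At position t the greedy parse needs only L = max_i L_i and the least i attaining it.
   Both are found by scanning the candidates i = 1, ..., t - 1 and comparing s[i..t-1]
   with s[t..n] symbol by symbol, keeping the best length so far and where it starts;
   ties keep the earlier candidate, so the leftmost maximiser survives.  Every quantity
   involved is a position or a length, at most n + 1, so a machine with eleven registers
   bounded by n + 2 and a finite control that remembers one input symbol (for the
   comparisons) computes the parse; registers only count up and down, so each copy goes
   through a scratch register. *)

Arguments Char {A}.
Arguments Copy {A}.
Arguments OChar {A}.
Arguments ONum {A}.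
Arguments IInc {A Q k}.
Arguments IDec {A Q k}.
Arguments IJz {A Q k}.
Arguments IRead {A Q k}.
Arguments IEmitChar {A Q k}.
Arguments IEmitReg {A Q k}.
Arguments IHalt {A Q k}.

Section Drop.
Variables (T : Type) (s : seq T).

Lemma drop_cons_size k x t : drop k s = x :: t -> k < size s.
Proof. by move=> Hd; rewrite ltnNge; apply/negP => /drop_oversize; rewrite Hd. Qed.

Lemma drop_pred_cons k x t : 0 < k -> drop k.-1 s = x :: t -> drop k s = t.
Proof. by move=> Hk Hd; rewrite -(prednK Hk) -addn1 addnC -drop_drop Hd /= drop0. Qed.

End Drop.

Section LongestPreviousFactor.
Variable A : finType.
Implicit Types (u v s : seq A).

Lemma lcp_size_r u v : lcp u v <= size v.
Proof. by elim: u v => [|a u IH] [|b v] //=; case: ifP => // _; exact: IH. Qed.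

Lemma lcp_nil_r u : lcp u [::] = 0.
Proof. by case: u. Qed.

Lemma Lat_take s t i : 0 < i <= t ->
  Lat s t i = lcp (take (t - i) (drop i.-1 s)) (drop t.-1 s).
Proof. by move=> Hit; rewrite /Lat take_drop; congr (lcp (drop _ (take _ _)) _); lia. Qed.

Lemma Lat_le s t i : Lat s t i <= size s - t.-1.
Proof. by rewrite -size_drop lcp_size_r. Qed.

Definition Lmax_below s t i := \max_(1 <= j < i) Lat s t j.

Lemma Lmax_below1 s t : Lmax_below s t 1 = 0.
Proof. by rewrite /Lmax_below big_geq. Qed.

Lemma Lmax_belowS s t i : 0 < i ->
  Lmax_below s t i.+1 = maxn (Lmax_below s t i) (Lat s t i).
Proof. by move=> Hi; rewrite /Lmax_below big_nat_recr. Qed.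

Lemma leq_Lmax_below s t i j : 0 < j < i -> Lat s t j <= Lmax_below s t i.
Proof. by move=> Hj; apply: (leq_bigmax_seq j) => //; rewrite mem_index_iota. Qed.

Lemma Lmax_below_le s t i : Lmax_below s t i <= size s - t.-1.
Proof. by apply/bigmax_leqP_seq => j _ _; exact: Lat_le. Qed.

Lemma Lmax_le s t : Lmax s t <= size s - t.-1.
Proof. exact: Lmax_below_le. Qed.

(* Vacuous for [b = 0]: no earlier occurrence is then referred to. *)
Definition leftmost_attaining s t i b k := 0 < b ->
  [/\ 0 < k, k < i, Lat s t k = b & forall j, 0 < j < k -> Lat s t j < b].

Definition best_below s t i b k := b = Lmax_below s t i /\ leftmost_attaining s t i b k.

Lemma best_below1 s t k : best_below s t 1 0 k.
Proof. by split; [rewrite Lmax_below1 | ]. Qed.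

Lemma best_belowS_new s t i b k : 0 < i -> best_below s t i b k -> b < Lat s t i ->
  best_below s t i.+1 (Lat s t i) i.
Proof.
move=> Hi [-> _] Hlt; split; first by rewrite Lmax_belowS // (maxn_idPr (ltnW Hlt)).
move=> _; split=> // j Hj; exact: leq_ltn_trans (leq_Lmax_below _ _ Hj) Hlt.
Qed.

Lemma best_belowS_keep s t i b k : 0 < i -> best_below s t i b k -> Lat s t i <= b ->
  best_below s t i.+1 b k.
Proof.
move=> Hi [Hb Hk] Hle; split; first by rewrite Lmax_belowS // -Hb (maxn_idPl Hle).
by move=> /Hk [? ? ? ?]; split=> //; exact: ltnW.
Qed.

Lemma istar_leftmost s t k :
  0 < Lmax s t -> leftmost_attaining s t t (Lmax s t) k -> istar s t = k.
Proof.
move=> HL /(_ HL) [Hk Hkt HLk Hbefore]; rewrite /istar.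
have -> : t.-1 = k.-1 + (t - k).-1.+1 by lia.
rewrite iotaD filter_cat /= add1n prednK // HLk eqxx.
suff -> : [seq j <- iota 1 k.-1 | Lat s t j == Lmax s t] = [::] by [].
apply/eqP; rewrite -[_ == _]negbK -has_filter; apply/hasPn => j.
by rewrite mem_iota => Hj; rewrite neq_ltn Hbefore //; lia.
Qed.

Definition next_phrase s t (a : A) : phrase A :=
  if Lmax s t <= 1 then Char a else Copy (istar s t) (Lmax s t).

Lemma parse_from_cons s f t a rest : drop t.-1 s = a :: rest ->
  parse_from s f.+1 t = next_phrase s t a :: parse_from s f (t + maxn 1 (Lmax s t)).
Proof.
move=> Hd; rewrite /= Hd /next_phrase.
by case: leqP => HL; congr (_ :: parse_from _ _ _); lia.
Qed.

End LongestPreviousFactor.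

Lemma read_inputE (A : finType) (s : seq A) p :
  0 < p -> read_input s p = ohead (drop p.-1 s).
Proof. by rewrite /read_input; case: p => // p _ /=; elim: s p => [|x s IH] [|p] //=. Qed.

Lemma updE k (r : 'I_k -> nat) j v j' : upd r j v j' = if j' == j then v else r j'.
Proof. by []. Qed.

Section BoundedRuns.
Variables (A : finType) (P : program A) (s : seq A) (K : nat).
Implicit Types (c : config P) (Q : config P -> Prop) (r : 'I_(pregs P) -> nat).

Definition regs_bounded r := forall j, r j <= K.

Definition runs_to c Q := regs_bounded (cregs c) ->
  exists n, (forall m, m <= n -> regs_bounded (cregs (iter m (step s) c))) /\
            Q (iter n (step s) c).

Lemma runs_to_refl c Q : Q c -> runs_to c Q.
Proof. by move=> Qc Hc; exists 0; split=> // [[|]]. Qed.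

Lemma runs_to_trans c Q1 Q2 :
  runs_to c Q1 -> (forall c', Q1 c' -> runs_to c' Q2) -> runs_to c Q2.
Proof.
move=> H1 H2 Hc; have [n [Hn Q1n]] := H1 Hc.
have [n2 [Hn2 Q2n]] := H2 _ Q1n (Hn n (leqnn n)).
exists (n2 + n); split; last by rewrite iterD.
move=> m Hm; case: (leqP m n) => Hmn; first exact: Hn.
by rewrite -(subnK (ltnW Hmn)) iterD; apply: Hn2; lia.
Qed.

Lemma runs_to_weaken c Q1 Q2 :
  runs_to c Q1 -> (forall c', Q1 c' -> Q2 c') -> runs_to c Q2.
Proof. by move=> H1 H12; apply: runs_to_trans H1 _ => c' /H12; exact: runs_to_refl. Qed.

Lemma runs_to_step c Q :
  (regs_bounded (cregs c) -> regs_bounded (cregs (step s c))) ->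
  runs_to (step s c) Q -> runs_to c Q.
Proof.
move=> Hb HR Hc; have [n [Hn Qn]] := HR (Hb Hc).
exists n.+1; split; last by rewrite iterSr.
by case=> [|m] Hm //; rewrite iterSr; exact: Hn.
Qed.

Lemma runs_to_ext q r r' o Q :
  r' =1 r -> runs_to (Config q r' o) Q -> runs_to (Config q r o) Q.
Proof. by move=> /functional_extensionality ->. Qed.

Lemma runs_inc q j q' r o Q : pdelta q = IInc j q' -> (r j).+1 <= K ->
  runs_to (Config q' (upd r j (r j).+1) o) Q -> runs_to (Config q r o) Q.
Proof.
move=> Hq HK HR; apply: runs_to_step; rewrite /step Hq // => Hb j' /=.
by rewrite updE; case: eqP => // ->.
Qed.

Lemma runs_dec q j q' r o Q : pdelta q = IDec j q' ->
  runs_to (Config q' (upd r j (r j).-1) o) Q -> runs_to (Config q r o) Q.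
Proof.
move=> Hq HR; apply: runs_to_step; rewrite /step Hq // => Hb j' /=.
by rewrite updE; case: eqP => // _; exact: leq_trans (leq_pred _) (Hb j).
Qed.

Lemma runs_jz q j q1 q2 r o Q : pdelta q = IJz j q1 q2 ->
  runs_to (Config (if r j == 0 then q1 else q2) r o) Q -> runs_to (Config q r o) Q.
Proof. by move=> Hq HR; apply: runs_to_step; rewrite /step Hq. Qed.

Lemma runs_read q j f r o Q : pdelta q = IRead j f ->
  runs_to (Config (f (read_input s (r j))) r o) Q -> runs_to (Config q r o) Q.
Proof. by move=> Hq HR; apply: runs_to_step; rewrite /step Hq. Qed.

Lemma runs_emit_char q a q' r o Q : pdelta q = IEmitChar a q' ->
  runs_to (Config q' r (rcons o (OChar a))) Q -> runs_to (Config q r o) Q.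
Proof. by move=> Hq HR; apply: runs_to_step; rewrite /step Hq. Qed.

Lemma runs_emit_reg q j q' r o Q : pdelta q = IEmitReg j q' ->
  runs_to (Config q' r (rcons o (ONum (r j)))) Q -> runs_to (Config q r o) Q.
Proof. by move=> Hq HR; apply: runs_to_step; rewrite /step Hq. Qed.

Ltac upd_solve := rewrite ?updE; repeat (case: eqP => [?|?]; subst);
  try congruence; try match goal with H : is_true (?x != ?x) |- _ => by rewrite eqxx in H end;
  lia.
Ltac upd_ext := move=> ?; upd_solve.

Lemma runs_clear q0 q1 qb g r o Q :
  pdelta q0 = IJz g qb q1 -> pdelta q1 = IDec g q0 ->
  runs_to (Config qb (upd r g 0) o) Q -> runs_to (Config q0 r o) Q.
Proof.
move=> H0 H1; move: {2}(r g) (erefl (r g)) => v.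
elim: v r => [|v IH] r Hv HR; apply: (runs_jz H0); rewrite Hv /=.
  by apply: runs_to_ext HR; upd_ext.
apply: (runs_dec H1); apply: IH; first by upd_solve.
by apply: runs_to_ext HR; upd_ext.
Qed.

Lemma runs_add q0 q1 q2 qb g d r o Q :
  pdelta q0 = IJz g qb q1 -> pdelta q1 = IDec g q2 -> pdelta q2 = IInc d q0 ->
  g != d -> r d + r g <= K ->
  runs_to (Config qb (upd (upd r g 0) d (r d + r g)) o) Q -> runs_to (Config q0 r o) Q.
Proof.
move=> H0 H1 H2 Hgd; move: {2}(r g) (erefl (r g)) => v.
elim: v r => [|v IH] r Hv HK HR; apply: (runs_jz H0); rewrite Hv /=.
  by apply: runs_to_ext HR; upd_ext.
apply: (runs_dec H1); apply: (runs_inc H2); first by upd_solve.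
by apply: IH; [upd_solve | upd_solve | apply: runs_to_ext HR; upd_ext].
Qed.

Lemma runs_add2 q0 q1 q2 q3 qb g d e r o Q :
  pdelta q0 = IJz g qb q1 -> pdelta q1 = IDec g q2 ->
  pdelta q2 = IInc d q3 -> pdelta q3 = IInc e q0 ->
  g != d -> g != e -> d != e -> r d + r g <= K -> r e + r g <= K ->
  runs_to (Config qb (upd (upd (upd r g 0) d (r d + r g)) e (r e + r g)) o) Q ->
  runs_to (Config q0 r o) Q.
Proof.
move=> H0 H1 H2 H3 Hgd Hge Hde; move: {2}(r g) (erefl (r g)) => v.
elim: v r => [|v IH] r Hv HKd HKe HR; apply: (runs_jz H0); rewrite Hv /=.
  by apply: runs_to_ext HR; upd_ext.
apply: (runs_dec H1); apply: (runs_inc H2); first by upd_solve.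
apply: (runs_inc H3); first by upd_solve.
by apply: IH; [upd_solve | upd_solve | upd_solve | apply: runs_to_ext HR; upd_ext].
Qed.

Lemma runs_copy q0 q1 q2 q3 q4 q5 q6 q7 q8 qb g d t r o Q :
  pdelta q0 = IJz d q2 q1 -> pdelta q1 = IDec d q0 ->
  pdelta q2 = IJz g q6 q3 -> pdelta q3 = IDec g q4 ->
  pdelta q4 = IInc d q5 -> pdelta q5 = IInc t q2 ->
  pdelta q6 = IJz t qb q7 -> pdelta q7 = IDec t q8 -> pdelta q8 = IInc g q6 ->
  g != d -> g != t -> d != t -> r t = 0 ->
  runs_to (Config qb (upd r d (r g)) o) Q -> runs_to (Config q0 r o) Q.
Proof.
move=> H0 H1 H2 H3 H4 H5 H6 H7 H8 Hgd Hgt Hdt Ht HR Hb.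
have Hg : r g <= K := Hb g; move: Hb.
apply: (runs_clear H0 H1); apply: (runs_add2 H2 H3 H4 H5) => //; try upd_solve.
apply: (runs_add H6 H7 H8); [by rewrite eq_sym | upd_solve | ].
by apply: runs_to_ext HR; upd_ext.
Qed.

End BoundedRuns.

Lemma step_halted (A : finType) (P : program A) s (c : config P) :
  halted c -> step s c = c.
Proof. by case: c => q r o; rewrite /halted /step /=; case: (pdelta q). Qed.

Lemma iter_step_halted (A : finType) (P : program A) s (c : config P) k :
  halted c -> iter k (step s) c = c.
Proof. by move=> Hc; elim: k => //= k ->; exact: step_halted. Qed.

Lemma runs_to_halting_run (A : finType) (P : program A) s K out :
  runs_to s K (init P) (fun c => halted c /\ cout c = out) ->
  (exists T, halted (run P s T) /\ cout (run P s T) = out) /\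
  (forall t j, cregs (run P s t) j <= K).
Proof.
move=> HR; have [n [Hb Hn]] := HR (fun _ => leq0n K); split; first by exists n.
move=> t j; case: (leqP t n) => Htn; first exact: Hb.
by rewrite /run -(subnK (ltnW Htn)) iterD iter_step_halted //; [exact: Hb | case: Hn].
Qed.

Section Machine.
Variable A : finType.

(* The second component carries one input symbol across a transition: s[Rdst] while
   s[Rsrc] is read, and s[t] before it is emitted. *)
Definition label := ('I_95 * option A)%type.
Definition lbl (n : nat) : label := (inord n, None).
Definition lbl_with (n : nat) (a : A) : label := (inord n, Some a).
Arguments lbl : simpl never.
Arguments lbl_with : simpl never.

(* During a comparison [Rbudget] counts the symbols of s[i..t-1] still available, and
   [Rgap] counts down from [best + 1], reaching 0 exactly when the candidate is better. *)
Notation Rpos := (@Ordinal 11 0 isT).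
Notation Rcand := (@Ordinal 11 1 isT).
Notation Rleft := (@Ordinal 11 2 isT).
Notation Rsrc := (@Ordinal 11 3 isT).
Notation Rdst := (@Ordinal 11 4 isT).
Notation Rbudget := (@Ordinal 11 5 isT).
Notation Rlen := (@Ordinal 11 6 isT).
Notation Rgap := (@Ordinal 11 7 isT).
Notation Rbest := (@Ordinal 11 8 isT).
Notation Rstart := (@Ordinal 11 9 isT).
Notation Rtmp := (@Ordinal 11 10 isT).

Definition code (n : nat) (m : option A) : instr A label 11 :=
  match n with
  (* end of input: halt *)
  | 0 => IRead Rpos (fun x => if x is Some _ then lbl 1 else lbl 93)
  (* Rbest := 0; Rcand := 1; Rleft := t - 1 *)
  | 1 => IJz Rbest (lbl 3) (lbl 2)
  | 2 => IDec Rbest (lbl 1)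
  | 3 => IJz Rcand (lbl 5) (lbl 4)
  | 4 => IDec Rcand (lbl 3)
  | 5 => IInc Rcand (lbl 6)
  | 6 => IJz Rleft (lbl 8) (lbl 7)
  | 7 => IDec Rleft (lbl 6)
  | 8 => IJz Rpos (lbl 12) (lbl 9)
  | 9 => IDec Rpos (lbl 10)
  | 10 => IInc Rleft (lbl 11)
  | 11 => IInc Rtmp (lbl 8)
  | 12 => IJz Rtmp (lbl 15) (lbl 13)
  | 13 => IDec Rtmp (lbl 14)
  | 14 => IInc Rpos (lbl 12)
  | 15 => IDec Rleft (lbl 16)
  (* next candidate: Rsrc := i; Rdst := t; Rbudget := t - i; Rgap := best + 1;
     Rlen := 0 *)
  | 16 => IJz Rleft (lbl 81) (lbl 17)
  | 17 => IJz Rsrc (lbl 19) (lbl 18)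
  | 18 => IDec Rsrc (lbl 17)
  | 19 => IJz Rcand (lbl 23) (lbl 20)
  | 20 => IDec Rcand (lbl 21)
  | 21 => IInc Rsrc (lbl 22)
  | 22 => IInc Rtmp (lbl 19)
  | 23 => IJz Rtmp (lbl 26) (lbl 24)
  | 24 => IDec Rtmp (lbl 25)
  | 25 => IInc Rcand (lbl 23)
  | 26 => IJz Rdst (lbl 28) (lbl 27)
  | 27 => IDec Rdst (lbl 26)
  | 28 => IJz Rpos (lbl 32) (lbl 29)
  | 29 => IDec Rpos (lbl 30)
  | 30 => IInc Rdst (lbl 31)
  | 31 => IInc Rtmp (lbl 28)
  | 32 => IJz Rtmp (lbl 35) (lbl 33)
  | 33 => IDec Rtmp (lbl 34)
  | 34 => IInc Rpos (lbl 32)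
  | 35 => IJz Rbudget (lbl 37) (lbl 36)
  | 36 => IDec Rbudget (lbl 35)
  | 37 => IJz Rleft (lbl 41) (lbl 38)
  | 38 => IDec Rleft (lbl 39)
  | 39 => IInc Rbudget (lbl 40)
  | 40 => IInc Rtmp (lbl 37)
  | 41 => IJz Rtmp (lbl 44) (lbl 42)
  | 42 => IDec Rtmp (lbl 43)
  | 43 => IInc Rleft (lbl 41)
  | 44 => IJz Rgap (lbl 46) (lbl 45)
  | 45 => IDec Rgap (lbl 44)
  | 46 => IJz Rbest (lbl 50) (lbl 47)
  | 47 => IDec Rbest (lbl 48)
  | 48 => IInc Rgap (lbl 49)
  | 49 => IInc Rtmp (lbl 46)
  | 50 => IJz Rtmp (lbl 53) (lbl 51)
  | 51 => IDec Rtmp (lbl 52)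
  | 52 => IInc Rbest (lbl 50)
  | 53 => IInc Rgap (lbl 54)
  | 54 => IJz Rlen (lbl 56) (lbl 55)
  | 55 => IDec Rlen (lbl 54)
  (* compare s[Rsrc..] with s[Rdst..] *)
  | 56 => IJz Rbudget (lbl 64) (lbl 57)
  | 57 => IRead Rdst (fun x => if x is Some b then lbl_with 58 b else lbl 64)
  | 58 => if m is Some b then IRead Rsrc (fun x => if x == Some b then lbl 59 else lbl 64)
          else IHalt
  | 59 => IInc Rlen (lbl 60)
  | 60 => IInc Rsrc (lbl 61)
  | 61 => IInc Rdst (lbl 62)
  | 62 => IDec Rbudget (lbl 63)
  | 63 => IDec Rgap (lbl 56)
  (* on improvement: Rbest := Rlen; Rstart := Rcand; then i := i + 1 *)
  | 64 => IJz Rgap (lbl 65) (lbl 79)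
  | 65 => IJz Rbest (lbl 67) (lbl 66)
  | 66 => IDec Rbest (lbl 65)
  | 67 => IJz Rlen (lbl 70) (lbl 68)
  | 68 => IDec Rlen (lbl 69)
  | 69 => IInc Rbest (lbl 67)
  | 70 => IJz Rstart (lbl 72) (lbl 71)
  | 71 => IDec Rstart (lbl 70)
  | 72 => IJz Rcand (lbl 76) (lbl 73)
  | 73 => IDec Rcand (lbl 74)
  | 74 => IInc Rstart (lbl 75)
  | 75 => IInc Rtmp (lbl 72)
  | 76 => IJz Rtmp (lbl 79) (lbl 77)
  | 77 => IDec Rtmp (lbl 78)
  | 78 => IInc Rcand (lbl 76)
  | 79 => IInc Rcand (lbl 80)
  | 80 => IDec Rleft (lbl 16)
  (* if L >= 2: emit (i*, L); t := t + L *)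
  | 81 => IJz Rbest (lbl 90) (lbl 82)
  | 82 => IDec Rbest (lbl 83)
  | 83 => IJz Rbest (lbl 90) (lbl 84)
  | 84 => IInc Rbest (lbl 85)
  | 85 => IEmitReg Rstart (lbl 86)
  | 86 => IEmitReg Rbest (lbl 87)
  | 87 => IJz Rbest (lbl 0) (lbl 88)
  | 88 => IDec Rbest (lbl 89)
  | 89 => IInc Rpos (lbl 87)
  (* L <= 1: emit s[t]; t := t + 1 *)
  | 90 => IRead Rpos (fun x => if x is Some a then lbl_with 91 a else lbl 93)
  | 91 => if m is Some a then IEmitChar a (lbl 92) else IHalt
  | 92 => IInc Rpos (lbl 0)
  (* start: t := 1 *)
  | 94 => IInc Rpos (lbl 0)
  | _ => IHalt
  end.

Definition lz77_program : program A :=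
  @Program A label 11 (lbl 94) (fun q => code (val q.1) q.2).

Lemma pdelta_lbl n : n < 95 -> pdelta (lbl n : pstate lz77_program) = code n None.
Proof. by move=> Hn; rewrite /= /lbl /= inordK. Qed.

Lemma pdelta_lbl_with n a : n < 95 -> pdelta (lbl_with n a : pstate lz77_program) = code n (Some a).
Proof. by move=> Hn; rewrite /= /lbl_with /= inordK. Qed.

Variables (s : seq A) (K : nat).
Notation runs_to := (@runs_to A lz77_program s K).
Notation Cfg := (@Config A lz77_program).

Ltac regs_ext := let Hj := fresh "Hj" in move=> [[|[|[|[|[|[|[|[|[|[|[|?]]]]]]]]]]] Hj] //;
  rewrite (eq_irrelevance Hj isT) /upd /=; lia.
Ltac regs_lia := rewrite ?updE /=; lia.
Ltac run_inc := eapply runs_inc; [by rewrite pdelta_lbl | | ].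
Ltac run_dec := eapply runs_dec; [by rewrite pdelta_lbl | ].
Ltac run_jz := eapply runs_jz; [by rewrite pdelta_lbl | ].
Ltac run_read := eapply runs_read; [by rewrite ?pdelta_lbl ?pdelta_lbl_with | ].
Ltac run_clear := eapply runs_clear; [by rewrite pdelta_lbl .. | ].
Ltac run_add := eapply runs_add; [by rewrite pdelta_lbl .. | by [] | | ].
Ltac run_copy := eapply runs_copy;
  [by rewrite pdelta_lbl .. | by [] | by [] | by [] | by rewrite ?updE /= | ].

(* Rebuilding the register file from its eleven values keeps terms small after long
   chains of updates. *)
Definition regs_table (r : 'I_11 -> nat) (j : 'I_11) : nat :=
  nth 0 [:: r Rpos; r Rcand; r Rleft; r Rsrc; r Rdst; r Rbudget; r Rlen; r Rgap; r Rbest;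
            r Rstart; r Rtmp] j.

Lemma runs_regs_table q r o Q : runs_to (Cfg q (regs_table r) o) Q -> runs_to (Cfg q r o) Q.
Proof. by apply: runs_to_ext; rewrite /regs_table; regs_ext. Qed.

Ltac compact_regs := apply: runs_regs_table; rewrite /regs_table /upd /=.

Definition after_compare (r : 'I_11 -> nat) m :=
  upd (upd (upd (upd (upd r Rlen (r Rlen + m)) Rsrc (r Rsrc + m)) Rdst (r Rdst + m))
    Rbudget (r Rbudget - m)) Rgap (r Rgap - m).

Lemma after_compare0 r : after_compare r 0 =1 r.
Proof. rewrite /after_compare; regs_ext. Qed.

Lemma runs_compare e r o Q : r Rbudget = e -> 0 < r Rsrc -> 0 < r Rdst ->
  let m := lcp (take e (drop (r Rsrc).-1 s)) (drop (r Rdst).-1 s) in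
  r Rlen + m <= K -> r Rsrc + m <= K -> r Rdst + m <= K ->
  runs_to (Cfg (lbl 64) (after_compare r m) o) Q -> runs_to (Cfg (lbl 56) r o) Q.
Proof.
elim: e r => [|e IH] r He Hp Hq m HKl HKp HKq HR; run_jz; rewrite He /=.
  by apply: runs_to_ext HR => j; rewrite /m take0 after_compare0.
have mismatch : m = 0 -> runs_to (Cfg (lbl 64) r o) Q.
  by move=> Hm0; apply: runs_to_ext HR => j; rewrite Hm0 after_compare0.
run_read; rewrite read_inputE //.
case Dq: (drop (r Rdst).-1 s) => [|b sq] /=; first by apply: mismatch; rewrite /m Dq lcp_nil_r.
run_read; rewrite read_inputE //.
case Dp: (drop (r Rsrc).-1 s) => [|b' sp] /=; first by apply: mismatch; rewrite /m Dp.
case: eqP => [[Eb]|Nb]; last first.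
  by apply: mismatch; rewrite /m Dp Dq /=; case: eqP => // Eb; case: Nb; rewrite Eb.
subst b'.
set m' := lcp (take e sp) sq.
have Hm : m = m'.+1 by rewrite /m Dp Dq /= eqxx.
rewrite Hm in HKl HKp HKq HR.
run_inc; first lia. run_inc; first by regs_lia.
run_inc; first by regs_lia. run_dec. run_dec.
apply: IH; rewrite ?updE /= ?(drop_pred_cons Hp Dp) ?(drop_pred_cons Hq Dq) -?/m'; try lia.
by apply: runs_to_ext HR; rewrite /after_compare; regs_ext.
Qed.

Definition scan_inv t (r : 'I_11 -> nat) :=
  [/\ r Rpos = t, r Rcand + r Rleft = t, 0 < r Rcand, r Rtmp = 0
    & best_below s t (r Rcand) (r Rbest) (r Rstart)].

Lemma runs_scan_step t r o Q : (size s).+1 <= K -> 0 < t <= size s ->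
  scan_inv t r -> 0 < r Rleft ->
  (forall r', scan_inv t r' -> r' Rleft = (r Rleft).-1 -> runs_to (Cfg (lbl 16) r' o) Q) ->
  runs_to (Cfg (lbl 17) r o) Q.
Proof.
move=> HK Ht [Hpos Hsum Hi0 Htmp [Hbest Hleft]] Hd HC.
set i := r Rcand in Hsum Hi0 Hbest Hleft.
have HLsize := Lat_le s t i.
have HBK := Lmax_below_le s t i.
have HLat : lcp (take (r Rleft) (drop i.-1 s)) (drop t.-1 s) = Lat s t i.
  by rewrite Lat_take; [congr (lcp (take _ _) _) | ]; lia.
run_copy. run_copy. run_copy. run_copy. run_inc; first by regs_lia.
run_clear.
apply: (@runs_compare (r Rleft)); rewrite ?updE /= -/i ?Hpos ?HLat; try lia.
run_jz; rewrite /after_compare !updE /=; compact_regs.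
have Hinv : best_below s t i (r Rbest) (r Rstart) by split.
case: (ltnP (r Rbest) (Lat s t i)) => Hcmp.
- have -> : (r Rbest).+1 - Lat s t i == 0 by rewrite subn_eq0.
  run_clear. run_add; first by regs_lia.
  run_copy. run_inc; first by regs_lia.
  run_dec. apply: HC; rewrite ?updE /=; last by lia.
  split; rewrite ?updE /=; try lia.
  rewrite add0n; exact: best_belowS_new Hinv Hcmp.
- have -> : ((r Rbest).+1 - Lat s t i == 0) = false by apply/negbTE; rewrite subn_eq0 -leqNgt.
  run_inc; first by regs_lia.
  run_dec. apply: HC; rewrite ?updE /=; last by lia.
  split; rewrite ?updE /=; try lia.
  exact: best_belowS_keep Hinv Hcmp.
Qed.

Lemma runs_scan t r o Q : (size s).+1 <= K -> 0 < t <= size s -> scan_inv t r ->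
  (forall r', r' Rpos = t -> r' Rtmp = 0 -> best_below s t t (r' Rbest) (r' Rstart) ->
     runs_to (Cfg (lbl 81) r' o) Q) ->
  runs_to (Cfg (lbl 16) r o) Q.
Proof.
move=> HK Ht; move: {2}(r Rleft) (erefl (r Rleft)) => d.
elim: d r => [|d IH] r Hd Hinv HC; run_jz; rewrite Hd /=.
  case: Hinv => Hpos Hi _ Htmp Hb; rewrite Hd addn0 in Hi.
  by apply: HC => //; rewrite -{2}Hi.
apply: (runs_scan_step HK Ht Hinv); first by rewrite Hd.
by move=> r' Hinv' Hd'; apply: IH => //; rewrite Hd' Hd.
Qed.

Lemma runs_find_longest t r o Q : (size s).+1 <= K -> 0 < t <= size s ->
  r Rpos = t -> r Rtmp = 0 ->
  (forall r', r' Rpos = t -> r' Rtmp = 0 -> best_below s t t (r' Rbest) (r' Rstart) ->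
     runs_to (Cfg (lbl 81) r' o) Q) ->
  runs_to (Cfg (lbl 1) r o) Q.
Proof.
move=> HK Ht Hpos Htmp HC.
run_clear. run_clear. run_inc; first by regs_lia.
run_copy. run_dec. compact_regs.
apply: (runs_scan HK Ht) => //; split; rewrite ?updE /= ?Hpos ?Htmp; try lia.
exact: best_below1.
Qed.

Lemma halted_lbl93 r o : halted (Cfg (lbl 93) r o).
Proof. by rewrite /halted /= /lbl inordK. Qed.

Lemma runs_emit_phrase t a rest r o Q : (size s).+1 <= K ->
  drop t.-1 s = a :: rest -> 0 < t -> r Rpos = t -> r Rtmp = 0 ->
  best_below s t t (r Rbest) (r Rstart) ->
  (forall r', r' Rpos = t + maxn 1 (Lmax s t) -> r' Rtmp = 0 ->
     runs_to (Cfg (lbl 0) r' (o ++ encode_phrase (next_phrase s t a))) Q) ->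
  runs_to (Cfg (lbl 81) r o) Q.
Proof.
move=> HK Hd Ht Hpos Htmp [Hbest Hleft] HC.
have {}Hbest : r Rbest = Lmax s t := Hbest; rewrite Hbest in Hleft.
have HL := Lmax_le s t; have Hts := drop_cons_size Hd; rewrite /next_phrase in HC.
have char_phrase r2 : Lmax s t <= 1 -> r2 Rpos = t -> r2 Rtmp = 0 -> runs_to (Cfg (lbl 90) r2 o) Q.
  move=> HL1 Hpos2 Htmp2; run_read; rewrite Hpos2 read_inputE // Hd /=.
  eapply runs_emit_char; first by rewrite pdelta_lbl_with.
  run_inc; first by rewrite Hpos2; lia.
  rewrite HL1 in HC; rewrite -cats1; apply: HC; rewrite ?updE /= ?Hpos2 //; lia.
have Hk : 1 < Lmax s t -> istar s t = r Rstart.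
  by move=> HL2; apply: istar_leftmost => //; exact: ltnW.
case EL: (Lmax s t) Hbest Hk => [|[|L]] Hbest Hk.
- by run_jz; rewrite Hbest /=; apply: char_phrase; rewrite ?EL.
- run_jz; rewrite Hbest /=; run_dec; run_jz; rewrite updE Hbest /=.
  by apply: char_phrase; rewrite ?updE ?EL.
run_jz; rewrite Hbest /=. run_dec. run_jz; rewrite updE Hbest /=.
run_inc; first by regs_lia.

eapply runs_emit_reg; first by rewrite pdelta_lbl.
eapply runs_emit_reg; first by rewrite pdelta_lbl.
run_add; first by rewrite ?updE /= Hpos; lia.
rewrite EL /= Hk // in HC; rewrite !updE /= -!cats1 -catA.
by apply: HC; rewrite ?updE /= ?Hpos ?Htmp //; lia.
Qed.

Definition parsed o f t (c : config lz77_program) :=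
  halted c /\ cout c = o ++ encode (parse_from s f t).

Lemma runs_parse f t r o : (size s).+1 <= K -> 0 < t <= (size s).+1 ->
  (size s).+1 - t <= f -> r Rpos = t -> r Rtmp = 0 ->
  runs_to (Cfg (lbl 0) r o) (parsed o f t).
Proof.
elim: f t r o => [|f IH] t r o HK Ht Hf Hpos Htmp; run_read; rewrite Hpos read_inputE; try lia.
  have -> : drop t.-1 s = [::] by apply: drop_oversize; lia.
  by apply: runs_to_refl; split; [exact: halted_lbl93 | rewrite cats0].
case Hd: (drop t.-1 s) => [|a rest] /=.
  by apply: runs_to_refl; split; [exact: halted_lbl93 | rewrite /= Hd cats0].
have Hts := drop_cons_size Hd.
apply: (@runs_find_longest t) => // [|r' Hpos' Htmp' Hbest]; first lia.
apply: (runs_emit_phrase HK Hd _ Hpos' Htmp' Hbest) => [|r2 Hpos2 Htmp2]; first lia.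
have HL := Lmax_le s t.
apply: runs_to_weaken; first apply: IH Hpos2 Htmp2 => //; try lia.
by move=> c [Hc Ec]; split; rewrite // Ec (parse_from_cons _ Hd) /encode -catA.
Qed.

Lemma runs_lz77 : (size s).+1 <= K ->
  runs_to (init lz77_program) (fun c => halted c /\ cout c = encode (lz77 s)).
Proof.
move=> HK; run_inc; first by rewrite /=; lia.
apply: runs_parse => //; rewrite ?updE /=; lia.
Qed.

End Machine.

Theorem lemma2 (A : finType) :
  exists P : program A, logspace_computes P (fun s => encode (lz77 s)).
Proof.
exists (lz77_program A), 1 => s; rewrite expn1.
exact/runs_to_halting_run/runs_lz77.
Qed.
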